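(* Let $G$ be a chordal graph that is $1$-extendable and let $v$ be a simplicial vertex of $G$. Then $G-N[v]$ is $1$-extendable.
   Context: All graphs are finite and simple. A chordal graph is a graph with no induced cycle of length at least four. A vertex $v$ is simplicial if its neighbourhood $N(v)$ induces a complete graph; $N[v]=N(v)\cup\{v\}$. A graph is $1$-extendable if every vertex belongs to some maximum independent set. $G-N[v]$ denotes the subgraph of $G$ induced by $V(G)\setminus N[v]$. *)

From mathcomp Require Import all_boot.
Set Implicit Arguments. Unset Strict Implicit. Unset Printing Implicit Defensive.

Definition simple_graph (T : finType) (e : rel T) : Prop :=
  symmetric e /\ irreflexive e.

Definition nbhd (T : finType) (e : rel T) (v : T) : {set T} := [set u | e v u].
Definition cnbhd (T : finType) (e : rel T) (v : T) : {set T} := v |: nbhd e v.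

Definition clique (T : finType) (e : rel T) (A : {set T}) : Prop :=
  forall x y, x \in A -> y \in A -> x != y -> e x y.

Definition simplicial (T : finType) (e : rel T) (v : T) : Prop :=
  clique e (nbhd e v).

(* Chordal: no induced cycle of length >= 4. A cycle is given by a
   duplicate-free sequence c of vertices with consecutive (cyclically)
   vertices adjacent; it is induced iff there is no chord, i.e. no edge
   between two positions that are not cyclically consecutive. *)
Definition has_chord (T : finType) (e : rel T) (c : seq T) : Prop :=
  exists (x0 : T) (i j : nat),
    [&& i < size c, j < size c, i != j,
        j != (i.+1 %% size c), i != (j.+1 %% size c) &
        e (nth x0 c i) (nth x0 c j)].

Definition chordal (T : finType) (e : rel T) : Prop :=
  forall c : seq T, uniq c -> 4 <= size c -> cycle e c -> has_chord e c.

Definition independent_in (T : finType) (e : rel T) (V A : {set T}) : Prop :=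
  A \subset V /\ forall x y, x \in A -> y \in A -> ~~ e x y.

Definition max_independent_in (T : finType) (e : rel T) (V A : {set T}) : Prop :=
  independent_in e V A /\
  forall B : {set T}, independent_in e V B -> #|B| <= #|A|.

Definition one_extendable_in (T : finType) (e : rel T) (V : {set T}) : Prop :=
  forall x, x \in V -> exists A, max_independent_in e V A /\ x \in A.

Definition one_extendable (T : finType) (e : rel T) : Prop :=
  one_extendable_in e [set: T].

From mathcomp Require Import all_boot.

Set Implicit Arguments.
Unset Strict Implicit.
Unset Printing Implicit Defensive.

(* Given x outside N[v], take a maximum independent
   set S of G containing x. Since N[v] is a clique, S meets it in at most one
   vertex, so |S \ N[v]| >= alpha(G) - 1. Conversely, every independent set B
   of G - N[v] extends to the independent set B + v of G, so
   alpha(G - N[v]) <= alpha(G) - 1. Hence S \ N[v] is a maximum independent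
   set of G - N[v], and it contains x. *)

Section SimplicialVertex.

Variables (T : finType) (e : rel T).
Hypotheses (e_sym : symmetric e) (e_irr : irreflexive e).

Lemma in_cnbhd (v u : T) : (u \in cnbhd e v) = (u == v) || e v u.
Proof. by rewrite !inE. Qed.

Lemma clique_cnbhd (v : T) : simplicial e v -> clique e (cnbhd e v).
Proof.
move=> simp a b; rewrite !in_cnbhd.
case/orP=> [/eqP-> | va] /orP[/eqP-> | vb] ab //.
- by rewrite eqxx in ab.
- by rewrite e_sym.
- by apply: simp; rewrite ?inE.
Qed.

Lemma independent_in_setI (V W A : {set T}) :
  independent_in e V A -> independent_in e (V :&: W) (A :&: W).
Proof.
case=> AV Aind; split; first exact: setSI.
by move=> x y /setIP[xA _] /setIP[yA _]; apply: Aind.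
Qed.

Lemma card_independent_clique_le1 (V A C : {set T}) :
  independent_in e V A -> clique e C -> #|A :&: C| <= 1.
Proof.
case=> _ Aind Ccl; apply/card_le1_eqP => a b /setIP[aA aC] /setIP[bA bC].
apply/eqP/negPn/negP; rewrite eq_sym => ab.
by move: (Aind _ _ aA bA); rewrite (Ccl _ _ aC bC ab).
Qed.

Lemma independent_setU1_cnbhd (v : T) (B : {set T}) :
  independent_in e (~: cnbhd e v) B -> independent_in e [set: T] (v |: B).
Proof.
case=> BV Bind; split; first exact: subsetT.
have nv b : b \in B -> ~~ e v b.
  by move/(subsetP BV); rewrite inE in_cnbhd negb_or => /andP[].
move=> a b /setU1P[-> | aB] /setU1P[-> | bB].
- by rewrite e_irr.
- exact: nv.
- by rewrite e_sym nv.
- exact: Bind.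
Qed.

Lemma max_independent_setD_cnbhd (v : T) (S : {set T}) :
  simplicial e v -> max_independent_in e [set: T] S ->
  max_independent_in e (~: cnbhd e v) (S :\: cnbhd e v).
Proof.
move=> simp [Sind Smax].
split.
  by have := independent_in_setI (~: cnbhd e v) Sind; rewrite setTI setDE.
move=> B Bind.
have vB : v \notin B.
  by apply/negP => /(subsetP Bind.1); rewrite inE in_cnbhd eqxx.
have SvB := Smax _ (independent_setU1_cnbhd Bind).
have SN := card_independent_clique_le1 Sind (clique_cnbhd simp).
rewrite cardsU1 vB -(cardsID (cnbhd e v) S) add1n in SvB.
by rewrite -ltnS (leq_trans SvB) // addnC -addn1 leq_add2l.
Qed.

End SimplicialVertex.

Theorem lemma4 (T : finType) (e : rel T) (v : T) :
  simple_graph e -> chordal e -> one_extendable e -> simplicial e v ->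
  one_extendable_in e (~: cnbhd e v).
Proof.
move=> [e_sym e_irr] _ oneE simp x xV.
have [S [Smax xS]] := oneE x (in_setT x).
exists (S :\: cnbhd e v); split; first exact: max_independent_setD_cnbhd.
by rewrite inE xS andbT -in_setC.
Qed.
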